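(* Let $q$ be a prime power and $n$ a positive integer coprime to $q$, and write $n=2^{\nu_2(n)}n'$ with $n'$ odd. The following are equivalent: (i) Type-I duadic splittings of $\mathbb{Z}_n$ exist; (ii) Type-I duadic splittings of $\mathbb{Z}_n$ given by some $q$-translation $\tau_t$ exist; (iii) $0<\nu_2(n)<2\,\nu_2(q-1)$. If these hold, then there is an integer $u$ with $\max\{0,\nu_2(n)-\nu_2(q-1)\}\le u<\min\{\nu_2(n),\nu_2(q-1)\}$, and for such $u$, $\tau_{2^u n'}$ is a $q$-translation of $\mathbb{Z}_n$ (i.e. $q\cdot 2^un'\equiv 2^un'\pmod n$) and Type-I duadic splittings of $\mathbb{Z}_n$ given by $\tau_{2^un'}$ exist.
   Context: $\mathbb{Z}_n=\mathbb{Z}/n\mathbb{Z}$, $\mathbb{Z}_n^*$ its unit group. The multiplier $\mu_q:\mathbb{Z}_n\to\mathbb{Z}_n$ is $i\mapsto qi \bmod n$; a subset $P\subseteq\mathbb{Z}_n$ is $\mu_q$-invariant if $\mu_q(P)=P$. For $s\in\mathbb{Z}_n^*$ and $t\in\mathbb{Z}_n$ with $qt\equiv t\pmod n$, $\rho_{s,t}:\mathbb{Z}_n\to\mathbb{Z}_n$, $i\mapsto s(i+t)\bmod n$; $\tau_t=\rho_{1,t}$ is called a $q$-translation. Type-I duadic splittings of $\mathbb{Z}_n$ given by $\rho_{s,t}$ exist if there is a $\mu_q$-invariant $P\subseteq\mathbb{Z}_n$ such that $\mathbb{Z}_n=P\cup\rho_{s,t}(P)$ is a disjoint union; Type-I duadic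 splittings of $\mathbb{Z}_n$ exist if this holds for some such $s,t$. $\nu_2(m)$ is the $2$-adic valuation of a nonzero integer $m$, $\nu_2(0)=\infty$. *)

(* Z_n is modelled as 'I_n (residues 0..n-1), n > 0. *)
From mathcomp Require Import all_boot.
Unset Printing Implicit Defensive.

Definition zimg (n : nat) (f : nat -> nat) (P : {set 'I_n}) : {set 'I_n} :=
  [set j : 'I_n | [exists i in P, val j == f (val i) %% n]].

Definition mu (q : nat) : nat -> nat := fun i => q * i.

Definition rho (s t : nat) : nat -> nat := fun i => s * (i + t).

Definition mu_invariant (n q : nat) (P : {set 'I_n}) : Prop :=
  zimg n (mu q) P = P.

Definition duadic_given_by (n q s t : nat) : Prop :=
  exists P : {set 'I_n},
    mu_invariant n q P /\
    P :&: zimg n (rho s t) P = set0 /\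
    P :|: zimg n (rho s t) P = setT.

Definition q_fixed (n q t : nat) : Prop := t < n /\ q * t = t %[mod n].

Definition typeI_exists (n q : nat) : Prop :=
  exists s t, s < n /\ coprime s n /\ q_fixed n q t /\ duadic_given_by n q s t.

(* ... given by some q-translation tau_t = rho_{1,t} *)
Definition typeI_by_translation (n q : nat) : Prop :=
  exists t, q_fixed n q t /\ duadic_given_by n q 1 t.

Definition prime_power (q : nat) : Prop :=
  exists p k, prime p /\ 0 < k /\ q = p ^ k.

Definition nu2 (m : nat) : nat := logn 2 m.

Definition oddpart (n : nat) : nat := n %/ 2 ^ nu2 n.

From mathcomp Require Import all_boot all_algebra cyclic zify ring.
Import GRing.Theory.

(* If P is mu_q-invariant and rho = rho_{s,t} exchanges P with its complement,
   then for odd m the point rho^m(i) lies in P iff i does not, while q^k i lies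
   in P iff i does; so rho^m(i) = q^k i (mod n) is impossible.  When nu2 n = 0
   or nu2 n >= 2 nu2 (q - 1) such a coincidence does exist.  Write
   rho^m(x) = S x + U; the congruence S x + U = q^k x (mod n) is solvable as
   soon as every d | n with S = q^k (mod d) divides U, which is checked one
   prime part of d at a time.  Take m the odd part of n' phi(n') (n' the odd
   part of n) and 2^e its 2-part: rho^(2^e m) is the identity modulo n', so
   n' divides U (1 + S + ... + S^(2^e - 1)), which is 2^e U modulo the odd
   part of d.  On the 2-part, k is chosen in {0, m} so that 2^(nu2 (q - 1) + 1)
   does not divide S - q^k, whereas 2^(nu2 (q - 1)) divides U.
   Conversely, if 0 < nu2 n < 2 nu2 (q - 1), the residues whose u-th binary
   digit is 0 form a splitting given by the translation by 2^u n': multiplying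
   by q = 1 (mod 2^(u+1)) keeps that digit and adding 2^u n' flips it. *)

Lemma eqmod_dvd [d n x y : nat] : d %| n -> x = y %[mod n] -> x = y %[mod d].
Proof. by move=> dn e; rewrite -(modn_dvdm x dn) -(modn_dvdm y dn) e. Qed.

Lemma mul_expn_eqmod (U a d j : nat) :
  U * a = U %[mod d] -> U * a ^ j = U %[mod d].
Proof.
move=> Ua; elim: j => [|j IH]; first by rewrite muln1.
by rewrite expnSr mulnA -modnMml IH modnMml.
Qed.

Lemma mul_geo_eqmod [U a d : nat] (j : nat) :
  U * a = U %[mod d] -> U * \sum_(i < j) a ^ i = U * j %[mod d].
Proof.
move=> Ua; elim: j => [|j IH]; first by rewrite big_ord0.
rewrite big_ord_recr /= mulnDr -modnDm IH mul_expn_eqmod // modnDm.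
by rewrite mulnS addnC.
Qed.

Lemma dvdn_of_mul_geo (e U S L : nat) : coprime e L ->
  U * S = U %[mod e] -> e %| U * \sum_(j < L) S ^ j -> e %| U.
Proof.
move=> eL US; rewrite /dvdn (mul_geo_eqmod L US) -/(dvdn e _) mulnC.
by rewrite Gauss_dvdr.
Qed.

Lemma expn_totient_mulK [c n : nat] (x : nat) : 0 < n -> coprime c n ->
  c ^ (totient n).-1 * (c * x) = x %[mod n].
Proof.
move=> n_gt0 cn; rewrite mulnA -expnSr prednK ?totient_gt0 //.
by rewrite -modnMml Euler_exp_totient // modnMml mul1n.
Qed.

Lemma logn_expn_sub1 [p q m : nat] : prime p -> 0 < q -> ~~ (p %| m) ->
  q = 1 %[mod p] -> logn p (q ^ m - 1) = logn p (q - 1).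
Proof.
move=> p_pr q_gt0 pNm q1.
have sum_m : \sum_(i < m) q ^ i = m %[mod p].
  by rewrite -[m in RHS]mul1n -(@mul_geo_eqmod 1 q) mul1n.
have sum_gt0 : 0 < \sum_(i < m) q ^ i.
  by apply: contraNT pNm; rewrite -eqn0Ngt /dvdn -sum_m => /eqP->; rewrite mod0n.
rewrite !subn1 predn_exp.
case: (posnP q.-1) => [-> //|q1_gt0].
rewrite lognM // [logn p (\sum_(i < m) _)]logn_coprime ?addn0 //.
by rewrite prime_coprime // /dvdn sum_m.
Qed.

Lemma expn_odd_neq1_mod [q m : nat] : 1 < q -> odd q -> odd m ->
  q ^ m <> 1 %[mod 2 ^ (logn 2 (q - 1)).+1].
Proof.
move=> q_gt1 q_odd m_odd /eqP.
have qm_gt1 : 1 < q ^ m.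
  by rewrite -(exp1n m) ltn_exp2r // lt0n; apply: contraTneq m_odd => ->.
rewrite (eqn_mod_dvd _ (ltnW qm_gt1)).
rewrite (pfactor_dvdn _ (isT : prime 2)); last by rewrite subn_gt0.
rewrite (logn_expn_sub1 (isT : prime 2) (ltnW q_gt1)) ?ltnn.
- by [].
- by rewrite dvdn2 m_odd.
by rewrite modn2 q_odd.
Qed.

Lemma partn_dvd_of_eqmod [p b d x y : nat] : prime p ->
  x = y %[mod d] -> x <> y %[mod p ^ b.+1] -> d`_p %| p ^ b.
Proof.
move=> p_pr xy Nxy; rewrite p_part dvdn_exp2l // leqNgt; apply/negP => lt_b.
apply: Nxy; have : p ^ b.+1 %| d`_p by rewrite p_part dvdn_exp2l.
move=> /dvdn_trans /(_ (dvdn_part _ _)) dv.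
by rewrite -(modn_dvdm x dv) -(modn_dvdm y dv) xy.
Qed.

Lemma odd_partn2' n : odd n`_2^'.
Proof. by have := part_pnat 2^' n; rewrite p'natE // dvdn2 negbK. Qed.

Lemma eqn_modz (a b n : nat) : (a == b %[mod n]) = (n%:Z %| (a%:Z - b%:Z)%R)%Z.
Proof. by rewrite -eqz_mod_dvd !modz_nat. Qed.

Lemma eqmod_affine_solvable (S Q U n : nat) : 0 < n ->
  (forall d, d %| n -> S = Q %[mod d] -> d %| U) ->
  exists i, S * i + U = Q * i %[mod n].
Proof.
move=> n_gt0 hyp; set D := (S%:Z - Q%:Z)%R.
have [u [v Bez]] := Bezoutz D n.
have /dvdzP[k Uk] : (gcdz D n %| U%:Z)%Z.
  rewrite dvdzE !absz_nat; apply: hyp; first exact: dvdn_gcdr.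
  by apply/eqP; rewrite eqn_modz; exact: (dvdz_gcdl D n).
set x := (- (k * u))%R.
have nx : (n%:Z %| (D * x + U%:Z)%R)%Z.
  by rewrite Uk -Bez /x; apply/dvdzP; exists (k * v)%R; ring.
exists `|(x %% n)%Z|; apply/eqP; rewrite eqn_modz PoszD !PoszM.
rewrite gez0_abs ?modz_ge0 -?lt0n //.
have -> : (S%:Z * (x %% n)%Z + U%:Z - Q%:Z * (x %% n)%Z =
          D * x + U%:Z + D * ((x %% n)%Z - x))%R by rewrite /D; ring.
by rewrite rpredD // dvdz_mull // -eqz_mod_dvd modz_mod.
Qed.

Lemma iter_affine (a b j x : nat) :
  iter j (fun y => a * y + b) x = a ^ j * x + b * \sum_(i < j) a ^ i.
Proof.
elim: j x => [|j IH] x; first by rewrite big_ord0 mul1n muln0 addn0.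
by rewrite iterSr IH big_ord_recr expnSr /=; ring.
Qed.

Lemma iter_rho (s t j x : nat) :
  iter j (rho s t) x = s ^ j * x + s * t * \sum_(i < j) s ^ i.
Proof. by rewrite -iter_affine; apply: eq_iter => y; rewrite /rho mulnDr. Qed.

Lemma iter_rho0_mul (s t j l : nat) :
  iter (l * j) (rho s t) 0 =
    s * t * (\sum_(i < j) s ^ i) * \sum_(i < l) (s ^ j) ^ i.
Proof. by rewrite iterM (eq_iter (iter_rho s t j)) iter_affine muln0. Qed.

Lemma dvdn_iter_rho0_totient (t : nat) [s n : nat] :
  coprime s n -> n %| iter (n * totient n) (rho s t) 0.
Proof.
move=> sn; rewrite iter_rho0_mul /dvdn mul_geo_eqmod ?modnMl //.
by rewrite -modnMmr Euler_exp_totient // modnMmr muln1.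
Qed.

Lemma rho_eqmod_inj (n c t x y : nat) : 0 < n -> coprime c n ->
  rho c t x = rho c t y %[mod n] -> x = y %[mod n].
Proof.
rewrite /rho => n_gt0 cn e; apply/eqP; rewrite -(eqn_modDr t); apply/eqP.
by rewrite -(expn_totient_mulK (x + t) n_gt0 cn) -modnMmr e modnMmr
  expn_totient_mulK.
Qed.

Lemma rho_preimage (n c t j : nat) : 0 < n -> coprime c n ->
  rho c t (c ^ (totient n).-1 * j + n.-1 * t) = j %[mod n].
Proof.
move=> n_gt0 cn; rewrite /rho -addnA -mulSnr prednK // mulnDr mulnCA.
by rewrite [c * (n * t)]mulnCA -modnDmr modnMr addn0 expn_totient_mulK.
Qed.

Lemma eq_zimg n (f g : nat -> nat) (P : {set 'I_n}) :
  f =1 g -> zimg n f P = zimg n g P.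
Proof.
by move=> fg; apply/setP => j; rewrite !inE; apply: eq_existsb => i; rewrite fg.
Qed.

Lemma mem_zimg_rho n c t (P : {set 'I_n.+1}) x : coprime c n.+1 ->
  (inZp (rho c t x) \in zimg n.+1 (rho c t) P) = (inZp x \in P).
Proof.
move=> cn; rewrite inE; apply/existsP/idP => [[i /andP[iP /eqP /= e]] | xP].
  suff -> : inZp x = i by [].
  apply: val_inj => /=; rewrite -(modn_small (ltn_ord i)).
  exact: rho_eqmod_inj cn e.
by exists (inZp x); rewrite xP /= /rho -[in X in _ == X]modnMmr modnDml modnMmr.
Qed.

Lemma zimg_rho_set n c t b (f : nat -> bool) : coprime c n.+1 ->
  (forall x, f (x %% n.+1) = f x) -> (forall x, f (rho c t x) = b (+) f x) ->
  zimg n.+1 (rho c t) [set x : 'I_n.+1 | f x] = [set x : 'I_n.+1 | b (+) f x].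
Proof.
move=> cn fmod frho; apply/setP => j.
set i := c ^ (totient n.+1).-1 * j + n * t.
have -> : j = inZp (rho c t i).
  by apply: val_inj; rewrite /= rho_preimage ?modn_small.
by rewrite mem_zimg_rho // !inE /= !fmod frho addbA addbb.
Qed.

Lemma duadic_given_byP [n q s t : nat] : coprime q n.+1 -> coprime s n.+1 ->
  duadic_given_by n.+1 q s t <->
  exists f : nat -> bool, [/\ forall x, f (x %% n.+1) = f x,
    forall x, f (q * x) = f x & forall x, f (rho s t x) = ~~ f x].
Proof.
have mu_rho x : q * x = rho q 0 x by rewrite /rho addn0.
have zimg_mu (P : {set 'I_n.+1}) : zimg n.+1 (mu q) P = zimg n.+1 (rho q 0) P.
  by apply: eq_zimg.
move=> qn sn; split => [[P [muP [PI PU]]] | [f [fmod fmu frho]]].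
  exists (fun x => inZp x \in P); split => x.
  - by congr (_ \in P); apply: val_inj; rewrite /= modn_mod.
  - by rewrite -{1}muP zimg_mu mu_rho mem_zimg_rho.
  rewrite -(@mem_zimg_rho n s t P x sn).
  move/setP/(_ (inZp (rho s t x))): PI; move/setP/(_ (inZp (rho s t x))): PU.
  rewrite in_setI in_setU in_set0 in_setT.
  by case: (_ \in P); case: (_ \in zimg n.+1 _ P).
exists [set x : 'I_n.+1 | f x].
rewrite /mu_invariant zimg_mu (@zimg_rho_set n q 0 false) // => [|x]; last first.
  by rewrite -mu_rho.
rewrite (@zimg_rho_set n s t true) //.
have -> : [set x : 'I_n.+1 | true (+) f x] = ~: [set x : 'I_n.+1 | f x].
  by apply/setP => x; rewrite !inE.
by split; [apply/setP => x; rewrite !inE | rewrite setICr setUCr].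
Qed.

Lemma duadic_iter_rho_neq n q s t m k i : coprime q n.+1 -> coprime s n.+1 ->
  duadic_given_by n.+1 q s t -> odd m ->
  iter m (rho s t) i <> q ^ k * i %[mod n.+1].
Proof.
move=> qn sn /(duadic_given_byP qn sn)[f [fmod fmu frho]] m_odd e.
have f_iter j x : f (iter j (rho s t) x) = odd j (+) f x.
  by elim: j => [|j IH] //=; rewrite frho IH negb_add.
have f_exp j x : f (q ^ j * x) = f x.
  by elim: j => [|j IH]; rewrite ?mul1n // expnS -mulnA fmu.
move: (f_iter m i); rewrite -fmod e fmod f_exp m_odd.
by case: (f i).
Qed.

Section OddOrbitCoincidence.

Variables n q s t : nat.
Hypotheses (n_gt0 : 0 < n) (q_gt1 : 1 < q) (qn : coprime q n) (sn : coprime s n).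
Hypothesis nqt : n %| (q - 1) * t.

Let b := nu2 (q - 1).
Let M := n`_2^' * totient n`_2^'.
Let m := M`_2^'.
Let S := s ^ m.
Let U := s * t * \sum_(i < m) s ^ i.
(* k is chosen so that S <> Q modulo 2 ^ b.+1, see expn_odd_neq1_mod. *)
Let Q := q ^ (if S == 1 %[mod 2 ^ b.+1] then m else 0).

Let m_odd : odd m. Proof. exact: odd_partn2'. Qed.

Let U_Q_eqmod : U * Q = U %[mod n].
Proof.
have nU : n %| U * (q - 1).
  apply: dvdn_trans nqt _; apply/dvdnP.
  by exists (s * \sum_(i < m) s ^ i); rewrite /U; ring.
apply: mul_expn_eqmod.
by rewrite -[q in LHS](subnK (ltnW q_gt1)) mulnDr muln1 -modnDml (eqP nU).
Qed.

Let odd_part_dvd_U d : d %| n -> S = Q %[mod d] -> d`_2^' %| U.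
Proof.
move=> dn SQ; have d2n : d`_2^' %| n`_2^' by exact: partn_dvd.
apply: (@dvdn_of_mul_geo _ _ S M`_2).
- by rewrite coprime_sym coprime_partC.
- rewrite -(eqmod_dvd (dvdn_trans (dvdn_part _ _) dn) U_Q_eqmod).
  by rewrite -modnMmr (eqmod_dvd (dvdn_part _ _) SQ) modnMmr.
apply: dvdn_trans d2n _.
have := dvdn_iter_rho0_totient t (coprime_dvdr (dvdn_part 2^' n) sn).
have M_gt0 : 0 < M by rewrite muln_gt0 part_gt0 totient_gt0 part_gt0.
by rewrite -/M -{1}(partnC 2 M_gt0) iter_rho0_mul.
Qed.

Let two_part_dvd_U d : (nu2 n = 0 \/ 2 * b <= nu2 n) ->
  d %| n -> S = Q %[mod d] -> d`_2 %| U.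
Proof.
move=> n2 dn SQ; have d2n : d`_2 %| n`_2 by exact: partn_dvd.
have [a0 | a_gt0] := posnP (nu2 n).
  by move: d2n; rewrite [n`_2]p_part -/(nu2 n) a0 dvdn1 => /eqP->.
have {n2} le_2b_a : 2 * b <= nu2 n by case: n2 => // a0; rewrite a0 in a_gt0.
have q_odd : odd q.
  rewrite -coprimen2 (coprime_dvdr _ qn) // -{1}(expn1 2) pfactor_dvdn //.
have b_t : 2 ^ b %| t.
  have [->|t_gt0] := posnP t; first exact: dvdn0.
  have := dvdn_trans (dvdn_part 2 n) nqt; rewrite p_part.
  rewrite !pfactor_dvdn ?muln_gt0 ?subn_gt0 ?q_gt1 // lognM ?subn_gt0 // -/b.
  by move=> le_a; rewrite -(leq_add2l b) addnn -mul2n (leq_trans le_2b_a).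
apply: (@dvdn_trans (2 ^ b)); last by rewrite /U -mulnA mulnCA dvdn_mulr.
apply: (partn_dvd_of_eqmod _ SQ) => //.
rewrite /Q; case: ifP => [/eqP S1 | /eqP S1 SQ1]; last by apply: S1; rewrite SQ1.
move=> SQm; apply: (expn_odd_neq1_mod q_gt1 q_odd m_odd).
by rewrite -[logn 2 _]/b -SQm.
Qed.

Lemma exists_odd_iter_rho_eqmod : (nu2 n = 0 \/ 2 * nu2 (q - 1) <= nu2 n) ->
  exists m k i, odd m /\ iter m (rho s t) i = q ^ k * i %[mod n].
Proof.
move=> n2; have [i ei] : exists i, S * i + U = Q * i %[mod n].
  apply: eqmod_affine_solvable => // d dn SQ.
  rewrite -(partnC 2 (dvdn_gt0 n_gt0 dn)) Gauss_dvd ?coprime_partC //.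
  by rewrite two_part_dvd_U ?odd_part_dvd_U.
exists m, (if S == 1 %[mod 2 ^ b.+1] then m else 0), i.
by rewrite iter_rho.
Qed.

End OddOrbitCoincidence.

Arguments exists_odd_iter_rho_eqmod [n q s t].

Lemma duadic_nu2_bounds n q s t : 1 < q -> coprime q n.+1 -> coprime s n.+1 ->
  q_fixed n.+1 q t -> duadic_given_by n.+1 q s t ->
  0 < nu2 n.+1 /\ nu2 n.+1 < 2 * nu2 (q - 1).
Proof.
move=> q_gt1 qn sn [_ /eqP qt] D.
have nqt : n.+1 %| (q - 1) * t.
  by move: qt; rewrite eqn_mod_dvd ?leq_pmull ?(ltnW q_gt1) // mulnBl mul1n.
have no_orbit : ~ (nu2 n.+1 = 0 \/ 2 * nu2 (q - 1) <= nu2 n.+1).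
  move=> n2; have [m [k [i [m_odd e]]]] :=
    exists_odd_iter_rho_eqmod (ltn0Sn n) q_gt1 qn sn nqt n2.
  exact: duadic_iter_rho_neq qn sn D m_odd e.
split; first by rewrite lt0n; apply/eqP => a0; apply: no_orbit; left.
by rewrite ltnNge; apply/negP => le_2b_a; apply: no_orbit; right.
Qed.

Lemma odd_div_eqmod (u x y : nat) :
  x = y %[mod 2 ^ u.+1] -> odd (x %/ 2 ^ u) = odd (y %/ 2 ^ u).
Proof.
have E z : odd (z %/ 2 ^ u) = odd (z %% 2 ^ u.+1 %/ 2 ^ u).
  by rewrite expnS -modn_divl modn2 oddb.
by move=> e; rewrite E e -E.
Qed.

Lemma odd_div_addMn (u o x : nat) :
  odd o -> odd ((x + 2 ^ u * o) %/ 2 ^ u) = ~~ odd (x %/ 2 ^ u).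
Proof. by move=> o_odd; rewrite addnC mulnC divnMDl ?expn_gt0 // oddD o_odd. Qed.

Lemma duadic_given_by_bit (n q u o : nat) : 0 < q -> coprime q n.+1 ->
  2 ^ u.+1 %| n.+1 -> 2 ^ u.+1 %| q - 1 -> odd o ->
  duadic_given_by n.+1 q 1 (2 ^ u * o).
Proof.
move=> q_gt0 qn un uq o_odd; apply/duadic_given_byP; rewrite ?coprime1n //.
exists (fun x => odd (x %/ 2 ^ u)); split=> x.
- by apply/odd_div_eqmod/(eqmod_dvd un); rewrite modn_mod.
- apply: odd_div_eqmod; rewrite -[q in LHS](subnK q_gt0) mulnDl mul1n.
  by rewrite -modnDml (eqP (dvdn_mulr x uq)).
by rewrite /rho mul1n odd_div_addMn.
Qed.

Lemma oddpartE n : 0 < n -> oddpart n = n`_2^'.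
Proof.
by move=> n_gt0; rewrite /oddpart /nu2 -p_part -{1}(partnC 2 n_gt0) mulKn.
Qed.

Lemma duadic_translation_2adic (q n u : nat) : 0 < n -> 1 < q -> coprime q n ->
  nu2 n - nu2 (q - 1) <= u -> u < minn (nu2 n) (nu2 (q - 1)) ->
  q_fixed n q (2 ^ u * oddpart n) /\ duadic_given_by n q 1 (2 ^ u * oddpart n).
Proof.
move=> n_gt0 q_gt1 qn le_u; rewrite leq_min => /andP[lt_ua lt_ub].
rewrite oddpartE //.
have q_2 : 2 ^ nu2 (q - 1) %| q - 1 by rewrite /nu2 -p_part dvdn_part.
have n_2 : 2 ^ nu2 n %| n by rewrite /nu2 -p_part dvdn_part.
split; last first.
  have u_n : 2 ^ u.+1 %| n by apply: dvdn_trans n_2; rewrite dvdn_exp2l.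
  have u_q : 2 ^ u.+1 %| q - 1 by apply: dvdn_trans q_2; rewrite dvdn_exp2l.
  case: n n_gt0 qn u_n {n_2 le_u lt_ua} => // n _ qn u_n.
  by apply: duadic_given_by_bit; rewrite ?odd_partn2' ?(ltnW q_gt1).
split.
  by rewrite -{2}(partnC 2 n_gt0) ltn_pmul2r ?part_gt0 // p_part ltn_exp2l.
rewrite -[q in LHS](subnK (ltnW q_gt1)) mulnDl mul1n -modnDml.
rewrite (eqP (_ : n %| (q - 1) * (2 ^ u * n`_2^'))) // mulnA.
rewrite -{1}(partnC 2 n_gt0) dvdn_mul // p_part.
apply: dvdn_trans (dvdn_mul q_2 (dvdnn (2 ^ u))).
by rewrite -expnD dvdn_exp2l // -leq_subLR.
Qed.

Theorem theorem3p10 (q n : nat) :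
  prime_power q -> 0 < n -> coprime q n ->
  (typeI_exists n q <-> typeI_by_translation n q) /\
  (typeI_by_translation n q <-> (0 < nu2 n /\ nu2 n < 2 * nu2 (q - 1))) /\
  (typeI_exists n q ->
     (exists u, nu2 n - nu2 (q - 1) <= u /\ u < minn (nu2 n) (nu2 (q - 1))) /\
     (forall u, nu2 n - nu2 (q - 1) <= u -> u < minn (nu2 n) (nu2 (q - 1)) ->
        q_fixed n q (2 ^ u * oddpart n) /\
        duadic_given_by n q 1 (2 ^ u * oddpart n))).
Proof.
move=> [p [e [p_pr [e_gt0 q_pe]]]]; case: n => // n _ qn.
have q_gt1 : 1 < q by rewrite q_pe -(exp1n e) ltn_exp2r ?prime_gt1.
set bounds := 0 < nu2 n.+1 /\ nu2 n.+1 < 2 * nu2 (q - 1).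
have u_range : bounds -> nu2 n.+1 - nu2 (q - 1) < minn (nu2 n.+1) (nu2 (q - 1)).
  by move=> [a_gt0 a_lt]; lia.
have ex_bounds : typeI_exists n.+1 q -> bounds.
  by case=> s [t [_ [sn [qt D]]]]; apply: duadic_nu2_bounds q_gt1 qn sn qt D.
have tr_bounds : typeI_by_translation n.+1 q -> bounds.
  by case=> t [qt D]; apply: duadic_nu2_bounds q_gt1 qn (coprime1n _) qt D.
have bounds_tr : bounds -> typeI_by_translation n.+1 q.
  move=> h; exists (2 ^ (nu2 n.+1 - nu2 (q - 1)) * oddpart n.+1).
  exact: duadic_translation_2adic (u_range h).
have bounds_ex : bounds -> typeI_exists n.+1 q.
  move=> h; have [t [qt D]] := bounds_tr h; exists 1, t.
  split; last by split; [exact: coprime1n | split].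
  by case: h => a_gt0 _; rewrite ltnS lt0n; apply: contraTneq a_gt0 => ->.
split; first by split=> [/ex_bounds/bounds_tr | /tr_bounds/bounds_ex].
split; first by split=> [/tr_bounds | /bounds_tr].
move=> /ex_bounds h; split.
  by exists (nu2 n.+1 - nu2 (q - 1)); split; last exact: u_range.
by move=> u; apply: duadic_translation_2adic.
Qed.
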